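(* Let $0<c_1\le c_2$ be constants, let $n$ be sufficiently large, let $t\in[1,n^{0.1}]$, and let $H$ be an undirected graph on $n$ vertices in which every vertex has degree between $c_1t$ and $c_2t$ and which has no cycle of length at most $8$. For all constants $a,b>0$ there is a constant $K$ (depending only on $a,b,c_1,c_2$) such that for every vertex set $C$ with $|C|\le at$, the number of distinct maximal cliques $D$ of $H^2$ with $|C\cap D|\ge bt$ is at most $K$.
   Context: $H^2$ (the square of $H$) is the graph on the vertex set of $H$ in which $u\neq v$ are adjacent if and only if there is a path of length exactly $2$ between $u$ and $v$ in $H$. A set $C$ is said to cover a maximal clique $D$ of $H^2$ if $|C\cap D|=\Omega(t)$. *)

From HB Require Import structures.
From mathcomp Require Import all_boot all_order all_algebra.
From mathcomp Require Import reals.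
Set Implicit Arguments. Unset Strict Implicit. Unset Printing Implicit Defensive.
Import Order.TTheory GRing.Theory Num.Theory.

Definition simple_graph (T : finType) (e : rel T) : Prop :=
  symmetric e /\ irreflexive e.

Definition deg (T : finType) (e : rel T) (v : T) : nat := #|[set w | e v w]|.

Definition no_short_cycle (T : finType) (e : rel T) (k : nat) : Prop :=
  forall s : seq T, uniq s -> 3 <= size s <= k -> ~~ cycle e s.

Definition sq_graph (T : finType) (e : rel T) : rel T :=
  fun u v => (u != v) && [exists w, e u w && e w v].

Definition is_clique (T : finType) (e : rel T) (D : {set T}) : bool :=
  [forall u in D, forall v in D, (u != v) ==> e u v].

Definition is_maximal_clique (T : finType) (e : rel T) (D : {set T}) : bool :=
  is_clique e D &&
  [forall D' : {set T}, (is_clique e D' && (D \subset D')) ==> (D' == D)].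

(* In a graph without cycles of length 3, 4 or 6, a maximal clique D of H^2
   containing two vertices x <> y is the neighbourhood N(w) of any common
   neighbour w of x and y: a vertex z of D outside N(w), together with common
   neighbours of x, z and of y, z, would close a cycle of length 3, 4 or 6.
   Hence every maximal clique of H^2 is a singleton or some N(w), and two
   distinct maximal cliques share at most one vertex.
   If bt <= 1, every counted clique meets C, so it is {x} or N(w) for some x
   in C and some neighbour w of x: there are at most
   |C| (c2 t + 1) <= a (c2 + b) / b^2 of them.  If bt > 1, every counted
   clique contains at least bt >= 2 vertices of C, hence at least (bt)^2 / 4
   pairs of vertices of C, and these sets of pairs are disjoint: there are at
   most 4 'C(|C|, 2) / (bt)^2 <= 2 a^2 / b^2 of them. *)

From HB Require Import structures.
From mathcomp Require Import all_boot all_order all_algebra.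
From mathcomp Require Import reals zify ring lra.
Set Implicit Arguments. Unset Strict Implicit. Unset Printing Implicit Defensive.
Import Order.TTheory GRing.Theory Num.Theory.

Section Cliques.
Variables (T : finType) (r : rel T).

Lemma clique_rel D : is_clique r D -> {in D &, forall u v, u != v -> r u v}.
Proof. by move=> /forall_inP rD u v /rD /forall_inP/[apply]/implyP. Qed.

Lemma maximal_clique_clique D : is_maximal_clique r D -> is_clique r D.
Proof. by case/andP. Qed.

Lemma maximal_clique_eq D D' :
  is_maximal_clique r D -> is_clique r D' -> D \subset D' -> D' = D.
Proof.
case/andP=> _ /forallP maxD cD' sDD'.
by apply/eqP/(implyP (maxD D')); rewrite cD'.
Qed.

End Cliques.

Lemma no_short_cycle_le (T : finType) (e : rel T) k l :
  (k <= l)%N -> no_short_cycle e l -> no_short_cycle e k.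
Proof.
move=> kl el s us /andP [s3 sk]; apply: el => //.
by rewrite s3 (leq_trans sk kl).
Qed.

Definition nbhd (T : finType) (e : rel T) (w : T) : {set T} := [set z | e w z].

Definition heavy_sq_cliques (R : numDomainType) (T : finType) (e : rel T)
    (C : {set T}) (s : R) : {set {set T}} :=
  [set D | is_maximal_clique (sq_graph e) D & (s <= #|C :&: D|%:R)%R].

Lemma leq_card_bigcup (I T : finType) (P : pred I) (F : I -> {set T}) :
  (#|\bigcup_(i | P i) F i| <= \sum_(i | P i) #|F i|)%N.
Proof.
apply: (big_ind2 (fun (A : {set T}) n => #|A| <= n)%N) => // [|A1 n1 A2 n2].
  by rewrite cards0.
by move=> A1n1 A2n2; apply: leq_trans (leq_card_setU A1 A2).1 (leq_add A1n1 A2n2).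
Qed.

Lemma mul2_bin2 k : (2 * 'C(k, 2) = k * k.-1)%N.
Proof. by rewrite -mul_bin_diag bin1. Qed.

Lemma mul2_bin2_le_sqr k : (2 * 'C(k, 2) <= k ^ 2)%N.
Proof. by rewrite mul2_bin2 leq_mul2l leq_pred orbT. Qed.

Lemma sqr_le_mul4_bin2 k : (1 < k)%N -> (k ^ 2 <= 4 * 'C(k, 2))%N.
Proof.
by move=> k_gt1; rewrite -[4]/(2 * 2)%N -mulnA mul2_bin2 mulnCA leq_mul2l; lia.
Qed.

Section SquareOfLargeGirth.
Variables (T : finType) (e : rel T).
Hypotheses (e_sym : symmetric e) (e_irr : irreflexive e).
Hypothesis e_girth : no_short_cycle e 6.

Lemma sq_graphP u v :
  reflect (u != v /\ exists2 w, e u w & e w v) (sq_graph e u v).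
Proof.
apply: (iffP andP) => [[-> /existsP [w /andP [uw wv]]] | [-> [w uw wv]]].
  by split=> //; exists w.
by split=> //; apply/existsP; exists w; rewrite uw.
Qed.

Lemma adj_neq u v : e u v -> u != v.
Proof. by apply: contraTneq => ->; rewrite e_irr. Qed.

Lemma adj_neqC u v : e u v -> v != u.
Proof. by rewrite eq_sym; apply: adj_neq. Qed.

Lemma no_triangle a b c : e a b -> e b c -> e c a -> False.
Proof.
move=> ab bc ca; have := @e_girth [:: a; b; c].
rewrite /= !inE !negb_or (adj_neq ab) (adj_neq bc) (adj_neqC ca) ab bc ca.
by move=> /(_ isT isT).
Qed.

Lemma no_square a b c d : a != c -> b != d ->
  e a b -> e b c -> e c d -> e d a -> False.
Proof.
move=> ac bd ab bc cd da; have := @e_girth [:: a; b; c; d].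
rewrite /= !inE !negb_or ac bd (adj_neq ab) (adj_neq bc) (adj_neq cd).
by rewrite (adj_neqC da) ab bc cd da => /(_ isT isT).
Qed.

Lemma no_hexagon a b c d f g :
  uniq [:: a; c; f] -> uniq [:: b; d; g] -> a != d -> b != f -> c != g ->
  e a b -> e b c -> e c d -> e d f -> e f g -> e g a -> False.
Proof.
rewrite /= !inE !negb_or !andbT.
move=> /andP [/andP [ac af] cf] /andP [/andP [bd bg] dg].
move=> ad bf cg ab bc cd df fg ga; have := @e_girth [:: a; b; c; d; f; g].
rewrite /= !inE !negb_or ac af cf bd bg dg ad bf cg.
rewrite (adj_neq ab) (adj_neq bc) (adj_neq cd) (adj_neq df) (adj_neq fg).
rewrite (adj_neqC ga).
by rewrite ab bc cd df fg ga => /(_ isT isT).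
Qed.

Lemma nbhd_sq_clique w : is_clique (sq_graph e) (nbhd e w).
Proof.
apply/forall_inP=> u; rewrite inE => wu; apply/forall_inP=> v; rewrite inE => wv.
by apply/implyP=> uv; apply/sq_graphP; split=> //; exists w; rewrite // e_sym.
Qed.

Lemma sq_clique_sub_nbhd D x y w : is_clique (sq_graph e) D ->
  x \in D -> y \in D -> x != y -> e x w -> e w y -> D \subset nbhd e w.
Proof.
move=> cD xD yD xy xw wy; apply/subsetP=> z zD; rewrite inE.
have [<-|xz] := eqVneq x z; first by rewrite e_sym.
have [<-//|yz] := eqVneq y z.
have /sq_graphP [_ [w1 xw1 w1z]] := clique_rel cD xD zD xz.
have /sq_graphP [_ [w2 yw2 w2z]] := clique_rel cD yD zD yz.
have [->//|ww1] := eqVneq w w1.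
have [->//|ww2] := eqVneq w w2.
exfalso; have [w21|w21] := eqVneq w2 w1.
  subst w2; apply: (no_square xy ww1 xw wy yw2).
  by rewrite e_sym.
have xw2 : x != w2.
  by apply: contraTneq yw2 => <-; apply/negP => yx; apply: no_triangle xw wy yx.
have wz : w != z.
  apply: contraTneq w1z => <-; apply/negP => w1w.
  by apply: (no_triangle xw1 w1w); rewrite e_sym.
have yw1 : y != w1.
  apply: contraTneq xw1 => <-; apply/negP => xy'.
  by apply: (no_triangle xw wy); rewrite e_sym.
apply: (no_hexagon _ _ xw2 wz yw1 xw wy yw2 w2z).
- by rewrite /= !inE !negb_or xy xz yz.
- by rewrite /= !inE !negb_or ww2 ww1 w21.
- by rewrite e_sym.
- by rewrite e_sym.
Qed.

Lemma maximal_sq_clique_nbhd D x y w : is_maximal_clique (sq_graph e) D ->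
  x \in D -> y \in D -> x != y -> e x w -> e w y -> D = nbhd e w.
Proof.
move=> mD xD yD xy xw wy; apply/esym/(maximal_clique_eq mD (nbhd_sq_clique w)).
exact: sq_clique_sub_nbhd (maximal_clique_clique mD) xD yD xy xw wy.
Qed.

Lemma maximal_sq_clique_cases D x : is_maximal_clique (sq_graph e) D -> x \in D ->
  D = [set x] \/ exists2 w, e x w & D = nbhd e w.
Proof.
move=> mD xD; have [sDx|/subsetPn [y yD]] := boolP (D \subset [set x]).
  by left; apply/eqP; rewrite eqEsubset sDx sub1set xD.
rewrite inE eq_sym => xy; right.
have /sq_graphP [_ [w xw wy]] := clique_rel (maximal_clique_clique mD) xD yD xy.
by exists w => //; apply: maximal_sq_clique_nbhd mD xD yD xy xw wy.
Qed.

Lemma eq_maximal_sq_cliques D D' x y :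
  is_maximal_clique (sq_graph e) D -> is_maximal_clique (sq_graph e) D' ->
  x \in D :&: D' -> y \in D :&: D' -> x != y -> D = D'.
Proof.
move=> mD mD' /setIP [xD xD'] /setIP [yD yD'] xy.
have /sq_graphP [_ [w xw wy]] := clique_rel (maximal_clique_clique mD) xD yD xy.
rewrite (maximal_sq_clique_nbhd mD xD yD xy xw wy).
by rewrite (maximal_sq_clique_nbhd mD' xD' yD' xy xw wy).
Qed.

Lemma card_maximal_sq_cliques_meeting C :
  (#|[set D | is_maximal_clique (sq_graph e) D & C :&: D != set0]|
    <= \sum_(x in C) deg e x + #|C|)%N.
Proof.
pose U := \bigcup_(x in C) nbhd e x.
have sub : [set D | is_maximal_clique (sq_graph e) D & C :&: D != set0]
    \subset nbhd e @: U :|: set1 @: C.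
  apply/subsetP=> D; rewrite inE => /andP [mD /set0Pn [x /setIP [xC xD]]].
  rewrite inE; have [->|[w xw ->]] := maximal_sq_clique_cases mD xD.
    by rewrite imset_f ?orbT.
  by rewrite imset_f //; apply/bigcupP; exists x; rewrite ?inE.
apply: leq_trans (subset_leq_card sub) (leq_trans (leq_card_setU _ _).1 _).
apply: leq_add (leq_imset_card _ _).
exact: leq_trans (leq_imset_card _ _) (leq_card_bigcup _ _).
Qed.

Lemma sum_bin2_maximal_sq_cliques C :
  (\sum_(D | is_maximal_clique (sq_graph e) D) 'C(#|C :&: D|, 2)
    <= 'C(#|C|, 2))%N.
Proof.
pose pairs (A : {set T}) := [set B : {set T} | B \subset A & #|B| == 2].
pose P D := if is_maximal_clique (sq_graph e) D then pairs (C :&: D) else set0.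
have disjP D D' : D != D' -> [disjoint P D & P D'].
  move=> DD'; rewrite -setI_eq0 /P; case: ifP => mD; last by rewrite set0I.
  case: ifP => mD'; last by rewrite setI0.
  apply: contraNT DD' => /set0Pn [B]; rewrite !inE.
  move=> /andP [/andP [BD Bpair] /andP [BD' _]].
  have [x [y [xy defB]]] := cards2P _ Bpair.
  move: BD BD'; rewrite defB !subUset !sub1set !inE.
  move=> /andP [/andP [_ xD] /andP [_ yD]] /andP [/andP [_ xD'] /andP [_ yD']].
  by apply/eqP/(eq_maximal_sq_cliques mD mD' _ _ xy); rewrite inE ?xD ?yD.
have -> : \sum_(D | is_maximal_clique (sq_graph e) D) 'C(#|C :&: D|, 2)
    = \sum_D #|P D|.
  rewrite big_mkcond; apply: eq_bigr => D _; rewrite /P.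
  by case: ifP; rewrite ?cards_draws ?cards0.
rewrite -cards_draws.
have -> : \sum_D #|P D| = #|\bigcup_D P D|.
  rewrite -sum1_card (partition_disjoint_bigcup _ _ disjP).
  by apply: eq_bigr => D _; rewrite sum1_card.
apply/subset_leq_card/bigcupsP => D _; rewrite /P.
case: ifP => _; last exact: sub0set.
apply/subsetP => B; rewrite !inE => /andP [/subset_trans-> //].
by rewrite subsetIl.
Qed.

Variable R : realFieldType.
Local Open Scope ring_scope.

Lemma card_heavy_sq_cliques_le_sum_deg C (s : R) : 0 < s ->
  (#|heavy_sq_cliques e C s| <= \sum_(x in C) deg e x + #|C|)%N.
Proof.
move=> s_gt0; apply: leq_trans (card_maximal_sq_cliques_meeting C).
apply/subset_leq_card/subsetP => D; rewrite !inE => /andP [-> sCD] /=.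
by rewrite -card_gt0 -(ltr_nat R) (lt_le_trans s_gt0 sCD).
Qed.

Lemma card_heavy_sq_cliques_mul_sqr C (s : R) : 1 < s ->
  #|heavy_sq_cliques e C s|%:R * s ^+ 2 <= 2 * #|C|%:R ^+ 2.
Proof.
move=> s_gt1; set F := heavy_sq_cliques e C s.
have sqr_le_bin2 D : D \in F -> s ^+ 2 <= 4 * 'C(#|C :&: D|, 2)%:R.
  rewrite inE => /andP [_ sk]; set k := #|C :&: D| in sk *.
  have k_gt1 : (1 < k)%N by rewrite -(ltr_nat R) (lt_le_trans s_gt1 sk).
  apply: le_trans (_ : k%:R ^+ 2 <= _).
    by apply: lerXn2r; rewrite ?nnegrE ?ler0n // (le_trans ler01 (ltW s_gt1)).
  by rewrite -natrX -(natrM _ 4) ler_nat sqr_le_mul4_bin2.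
have sum_le : (\sum_(D in F) 'C(#|C :&: D|, 2) <= 'C(#|C|, 2))%N.
  apply: leq_trans (sum_bin2_maximal_sq_cliques C).
  rewrite big_mkcond [X in (_ <= X)%N]big_mkcond; apply: leq_sum => D _.
  by rewrite inE; case: is_maximal_clique => //=; case: ifP.
rewrite mulr_natl -sumr_const; apply: le_trans (ler_sum _ sqr_le_bin2) _.
rewrite -mulr_sumr -natr_sum -natrX -(natrM _ 4) -(natrM _ 2) ler_nat.
apply: leq_trans (leq_mul (leqnn 4) sum_le) _.
by rewrite -[4%N]/(2 * 2)%N -mulnA leq_mul2l mul2_bin2_le_sqr.
Qed.

Lemma card_heavy_sq_cliques_small (C : {set T}) (a b c t : R) :
    0 < a -> 0 < b -> 0 <= c -> 0 < t -> b * t <= 1 -> #|C|%:R <= a * t ->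
    (forall x, (deg e x)%:R <= c * t) ->
  #|heavy_sq_cliques e C (b * t)|%:R <= a * (c + b) / b ^+ 2.
Proof.
move=> a_gt0 b_gt0 c_ge0 t_gt0 bt_le1 C_le deg_le.
have ct_ge0 : 0 <= c * t by rewrite mulr_ge0 // ltW.
have := card_heavy_sq_cliques_le_sum_deg C (mulr_gt0 b_gt0 t_gt0).
rewrite -(ler_nat R) natrD natr_sum => /le_trans; apply.
have sum_deg : \sum_(x in C) (deg e x)%:R <= #|C|%:R * (c * t).
  by rewrite mulr_natl -sumr_const; apply: ler_sum => x _.
rewrite ler_pdivlMr ?exprn_gt0 //.
apply: le_trans (_ : (a * t) * (c * t + 1) * b ^+ 2 <= _).
  rewrite ler_pM2r ?exprn_gt0 //.
  apply: le_trans (_ : #|C|%:R * (c * t + 1) <= _); first lra.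
  by rewrite ler_pM2r //; lra.
have -> : a * t * (c * t + 1) * b ^+ 2 = a * (c * (b * t) ^+ 2 + b * (b * t)).
  by ring.
rewrite ler_pM2l //; apply: lerD.
  by rewrite ler_piMr // expr_le1 // mulr_ge0 ?ltW.
by rewrite ger_pMr.
Qed.

Lemma card_heavy_sq_cliques_large (C : {set T}) (a b t : R) :
    0 < b -> 0 < t -> 1 < b * t -> #|C|%:R <= a * t ->
  #|heavy_sq_cliques e C (b * t)|%:R <= 2 * a ^+ 2 / b ^+ 2.
Proof.
move=> b_gt0 t_gt0 bt_gt1 C_le.
have C_sqr : #|C|%:R ^+ 2 <= (a * t) ^+ 2.
  by apply: lerXn2r (C_le); rewrite nnegrE // (le_trans _ C_le).
rewrite ler_pdivlMr ?exprn_gt0 // -(ler_pM2r (exprn_gt0 2 t_gt0)).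
have sqrMt x y : x * y ^+ 2 * t ^+ 2 = x * (y * t) ^+ 2 by ring.
rewrite !sqrMt; apply: le_trans (card_heavy_sq_cliques_mul_sqr C bt_gt1) _.
exact: ler_wpM2l C_sqr.
Qed.

End SquareOfLargeGirth.

Local Open Scope ring_scope.

Theorem lemmaA7 (R : realType) (c1 c2 : R) (hc1 : 0 < c1) (hc12 : c1 <= c2) :
  exists N : nat, forall a b : R, 0 < a -> 0 < b ->
  exists K : nat,
  forall (n : nat) (t : R) (T : finType) (e : rel T),
    (N <= n)%N ->
    #|T| = n ->
    1 <= t -> t ^+ 10 <= n%:R ->
    simple_graph e ->
    (forall v : T, c1 * t <= (deg e v)%:R /\ (deg e v)%:R <= c2 * t) ->
    no_short_cycle e 8 ->
    forall C : {set T}, #|C|%:R <= a * t ->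
    (#|[set D : {set T} | is_maximal_clique (sq_graph e) D
                          & (b * t <= #|C :&: D|%:R)%R]| <= K)%N.
Proof.
have c2_ge0 := ltW (lt_le_trans hc1 hc12).
exists 0%N => a b a_gt0 b_gt0.
have [a_ge0 b_ge0] := (ltW a_gt0, ltW b_gt0).
exists (maxn (Num.truncn (a * (c2 + b) / b ^+ 2))
             (Num.truncn (2 * a ^+ 2 / b ^+ 2))).
move=> n t T e _ _ t_ge1 _ [e_sym e_irr] deg_le girth C C_le.
have girth6 := no_short_cycle_le (isT : (6 <= 8)%N) girth.
have t_gt0 : 0 < t by apply: lt_le_trans t_ge1.
have [bt_le1|bt_gt1] := leP (b * t) 1.
- apply: (leq_trans _ (leq_maxl _ _)).
  rewrite truncn_ge_nat ?divr_ge0 ?mulr_ge0 ?addr_ge0 ?exprn_ge0 //.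
  apply: card_heavy_sq_cliques_small => // x; exact: (deg_le x).2.
- apply: (leq_trans _ (leq_maxr _ _)).
  rewrite truncn_ge_nat ?divr_ge0 ?mulr_ge0 ?exprn_ge0 //.
  exact: card_heavy_sq_cliques_large.
Qed.
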